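(* The equation $x^4+9x^2y^2+27y^4=z^2$ has no solution $(x,y,z)\in\mathbb{Z}^3$ with $x,y,z$ all nonzero. *)

From Stdlib Require Import ZArith Lia.

(* Fermat-style descent on y^2.  Dividing out common primes, a solution may be taken
   primitive; then 3 does not divide x, and y = 2 m is even because for odd y the left
   side is 3, 5 or 7 modulo 8.  Since z^2 = (x^2 + 18 m^2)^2 + 4 * 27 m^4, there are
   coprime p, q > 0 with p q = 27 m^4 and q - p = x^2 + 18 m^2; modulo 3 this forces
   p = 27 b^4, q = a^4, so (a^2 - 9 b^2)^2 = x^2 + 4 * 27 b^4.  Splitting 27 b^4 in the
   same way gives b^2 = (e f)^2 and |a^2 - 9 b^2| = e^4 + 27 f^4.  The sign is + since
   e^4 - 9 e^2 f^2 + 27 f^4 > 0, so a^2 = e^4 + 9 e^2 f^2 + 27 f^4 with f^2 < y^2. *)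

From Stdlib Require Import ZArith Znumtheory Zpow_facts Lia.
Open Scope Z_scope.

Lemma exists_prime_divisor (n : Z) : 1 < n -> exists p, prime p /\ (p | n).
Proof.
  intros Hn. assert (Hn0 : 0 <= n) by lia. revert Hn.
  pattern n; apply Z_lt_induction; [|exact Hn0]; clear n Hn0.
  intros n IH Hn.
  destruct (prime_dec n) as [Hp|Hp].
  - exists n. split; [exact Hp|apply Z.divide_refl].
  - destruct (not_prime_divide n Hn Hp) as (d & Hd & Hdn).
    destruct (IH d) as (p & Hpr & Hpd); [lia|lia|].
    exists p. split; [exact Hpr|exact (Z.divide_trans _ _ _ Hpd Hdn)].
Qed.

Lemma exists_common_prime_divisor (x y : Z) :
  x <> 0 -> Z.gcd x y <> 1 -> exists p, prime p /\ (p | x) /\ (p | y).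
Proof.
  intros Hx Hg.
  assert (Hg0 : Z.gcd x y <> 0) by (rewrite Z.gcd_eq_0; tauto).
  pose proof (Z.gcd_nonneg x y).
  destruct (exists_prime_divisor (Z.gcd x y)) as (p & Hp & Hpg); [lia|].
  exists p. split; [exact Hp|split].
  - exact (Z.divide_trans _ _ _ Hpg (Z.gcd_divide_l x y)).
  - exact (Z.divide_trans _ _ _ Hpg (Z.gcd_divide_r x y)).
Qed.

Lemma rel_prime_no_common_prime (a b p : Z) :
  rel_prime a b -> prime p -> (p | a) -> ~ (p | b).
Proof.
  intros [_ _ Hg] Hp Ha Hb.
  pose proof (prime_ge_2 p Hp).
  destruct (Z.divide_1_r p (Hg p Ha Hb)); lia.
Qed.

Lemma prime_dvd_pow (p a n : Z) : prime p -> 0 <= n -> (p | a ^ n) -> (p | a).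
Proof.
  intros Hp Hn. pattern n; apply natlike_ind; [| |exact Hn]; clear n Hn.
  - intros H1. pose proof (prime_ge_2 p Hp).
    destruct (Z.divide_1_r p H1); lia.
  - intros n Hn IH. rewrite Z.pow_succ_r by exact Hn.
    intros Hpan. destruct (prime_mult p Hp a (a ^ n) Hpan); auto.
Qed.

Lemma pow4_pos (b : Z) : b <> 0 -> 0 < b ^ 4.
Proof. intros Hb. assert (0 < b ^ 2) by nia. nia. Qed.

Lemma pow4_eq_sq_eq (u v : Z) : u ^ 4 = v ^ 4 -> u ^ 2 = v ^ 2.
Proof.
  intros E. apply (Z.pow_inj_l _ _ 2); [lia|lia|lia|].
  rewrite <- !Z.pow_mul_r by lia. exact E.
Qed.

Lemma rel_prime_mul_eq_pow (n u v w : Z) :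
  0 < n -> 0 < u -> rel_prime u v -> u * v = w ^ n -> exists a, u = a ^ n.
Proof.
  intros Hn Hu. assert (Hu0 : 0 <= u) by lia. revert v w Hu.
  pattern u; apply Z_lt_induction; [|exact Hu0]; clear u Hu0.
  intros u IH v w Hu Huv E.
  destruct (Z.eq_dec u 1) as [->|Hu1]; [exists 1; rewrite Z.pow_1_l; lia|].
  destruct (exists_prime_divisor u) as (p & Hp & Hpu); [lia|].
  pose proof (prime_ge_2 p Hp).
  assert (Hpw : (p | w)).
  { apply (prime_dvd_pow p w n Hp); [lia|]. rewrite <- E. now apply Z.divide_mul_l. }
  destruct Hpw as [w' ->].
  assert (Hpnu : (p ^ n | u)).
  { apply Gauss with v.
    - rewrite Z.mul_comm, E, Z.pow_mul_l. apply Z.divide_factor_r.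
    - apply rel_prime_sym, rel_prime_Zpower_r; [lia|].
      apply rel_prime_sym, prime_rel_prime; [exact Hp|].
      exact (rel_prime_no_common_prime u v p Huv Hp Hpu). }
  destruct Hpnu as [u' ->].
  assert (Hpn : 1 < p ^ n) by (apply Zpower_gt_1; lia).
  assert (E' : u' * v = w' ^ n).
  { apply Z.mul_reg_l with (p ^ n); [lia|].
    transitivity (u' * p ^ n * v); [ring|]. rewrite E, Z.pow_mul_l. ring. }
  destruct (IH u' ltac:(nia) v w' ltac:(nia)) as [a Ha]; [|exact E'|].
  - apply (rel_prime_div _ _ _ Huv). apply Z.divide_factor_l.
  - exists (a * p). rewrite Ha, Z.pow_mul_l. reflexivity.
Qed.

Lemma rel_prime_mul_eq_prime_pow_mul_pow_l (l k n p q m : Z) :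
  prime l -> 0 <= k -> 0 < n -> 0 < p -> 0 < q -> rel_prime p q -> ~ (l | q) ->
  p * q = l ^ k * m ^ n ->
  exists a b, m ^ n = (a * b) ^ n /\ p = l ^ k * b ^ n /\ q = a ^ n.
Proof.
  intros Hl Hk Hn Hp Hq Hpq Hlq E.
  assert (Hlkp : (l ^ k | p)).
  { apply Gauss with q.
    - rewrite Z.mul_comm, E. apply Z.divide_factor_l.
    - apply rel_prime_sym, rel_prime_Zpower_r; [exact Hk|].
      apply rel_prime_sym, prime_rel_prime; assumption. }
  destruct Hlkp as [p' ->].
  assert (Hlk : 0 < l ^ k) by (apply Z.pow_pos_nonneg; [pose proof (prime_ge_2 l Hl)|]; lia).
  assert (E' : p' * q = m ^ n).
  { apply Z.mul_reg_l with (l ^ k); [lia|]. rewrite <- E. ring. }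
  assert (Hp'q : rel_prime p' q) by (apply (rel_prime_div _ _ _ Hpq), Z.divide_factor_l).
  destruct (rel_prime_mul_eq_pow n p' q m) as [b Hb]; [lia|nia|exact Hp'q|exact E'|].
  destruct (rel_prime_mul_eq_pow n q p' m) as [a Ha]; [lia|lia| |lia|].
  { now apply rel_prime_sym. }
  exists a, b. split; [|split].
  - rewrite <- E', Ha, Hb, Z.pow_mul_l. ring.
  - rewrite Hb. ring.
  - exact Ha.
Qed.

Lemma rel_prime_mul_eq_prime_pow_mul_pow (l k n p q m : Z) :
  prime l -> 0 <= k -> 0 < n -> 0 < p -> 0 < q -> rel_prime p q ->
  p * q = l ^ k * m ^ n ->
  exists a b, m ^ n = (a * b) ^ n /\
    (p = l ^ k * b ^ n /\ q = a ^ n \/ p = a ^ n /\ q = l ^ k * b ^ n).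
Proof.
  intros Hl Hk Hn Hp Hq Hpq E.
  destruct (Zdivide_dec l q) as [Hlq|Hlq].
  - assert (Hlp : ~ (l | p))
      by (intros Hlp; exact (rel_prime_no_common_prime p q l Hpq Hl Hlp Hlq)).
    destruct (rel_prime_mul_eq_prime_pow_mul_pow_l l k n q p m)
      as (a & b & Hm & Eq & Ep); [assumption..|now apply rel_prime_sym|exact Hlp|lia|].
    exists a, b. tauto.
  - destruct (rel_prime_mul_eq_prime_pow_mul_pow_l l k n p q m)
      as (a & b & Hm & Ep & Eq); [assumption..|].
    exists a, b. tauto.
Qed.

Lemma sq_eq_sq_add_4mul_factor (U V N : Z) :
  0 <= U -> 0 < N -> rel_prime V N -> U ^ 2 = V ^ 2 + 4 * N ->
  exists r s, 0 < r /\ 0 < s /\ rel_prime r s /\ r * s = N /\ U = r + s /\ V = s - r.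
Proof.
  intros HU HN [_ _ HVN] E.
  destruct (Z.Even_or_Odd (U - V)) as [[r Hr]|[i Hi]].
  2:{ exfalso. assert (HUV : U + V = 2 * i + 1 + 2 * V) by lia.
      assert (Hprod : (U - V) * (U + V) = 4 * N) by lia.
      rewrite Hi, HUV in Hprod. lia. }
  exists r, (U - r).
  assert (Hrs : r * (U - r) = N) by nia.
  split; [nia|split; [nia|split; [|split; [exact Hrs|split; lia]]]].
  constructor; [apply Z.divide_1_l|apply Z.divide_1_l|].
  intros d Hdr Hds. apply HVN.
  - replace V with (U - r - r) by lia. now apply Z.divide_sub_r.
  - rewrite <- Hrs. now apply Z.divide_mul_l.
Qed.

Lemma rel_prime_27_mul_pow4 (u w : Z) :
  ~ (3 | u) -> rel_prime u w -> rel_prime u (27 * w ^ 4).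
Proof.
  intros H3 Huw. apply rel_prime_mult.
  - change 27 with (3 ^ 3). apply rel_prime_Zpower_r; [lia|].
    apply rel_prime_sym, prime_rel_prime; [exact prime_3|exact H3].
  - apply rel_prime_Zpower_r; [lia|exact Huw].
Qed.

Lemma square_mod3 (x : Z) : (3 | x) \/ exists k, x ^ 2 = 3 * k + 1.
Proof.
  destruct (Zdivide_dec 3 x) as [H|H]; [now left|right].
  pose proof (Z.div_mod x 3 ltac:(lia)) as Hx.
  pose proof (Z.mod_pos_bound x 3 ltac:(lia)).
  set (q := x / 3) in *. set (r := x mod 3) in *.
  assert (Hr : r = 0 \/ r = 1 \/ r = 2) by lia.
  destruct Hr as [Hr|[Hr|Hr]]; rewrite Hr in Hx.
  - exfalso. apply H. exists q. lia.
  - exists (3 * q ^ 2 + 2 * q). rewrite Hx. ring.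
  - exists (3 * q ^ 2 + 4 * q + 1). rewrite Hx. ring.
Qed.

Lemma three_dvd_sum_sq (u v : Z) : (3 | u ^ 2 + v ^ 2) -> (3 | u).
Proof.
  intros [t Ht].
  destruct (square_mod3 u) as [Hu|[i Hi]]; [exact Hu|exfalso].
  destruct (square_mod3 v) as [[j ->]|[k Hk]]; lia.
Qed.

Lemma square_mod8 (z : Z) :
  exists k, z ^ 2 = 8 * k \/ z ^ 2 = 8 * k + 1 \/ z ^ 2 = 8 * k + 4.
Proof.
  destruct (Z.Even_or_Odd z) as [[i ->]|[i ->]];
    destruct (Z.Even_or_Odd i) as [[j ->]|[j ->]].
  - exists (2 * j ^ 2). lia.
  - exists (2 * j ^ 2 + 2 * j). lia.
  - exists (2 * j ^ 2 + j). lia.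
  - exists (2 * j ^ 2 + 3 * j + 1). lia.
Qed.

Definition quartic (x y : Z) : Z := x ^ 4 + 9 * x ^ 2 * y ^ 2 + 27 * y ^ 4.

Definition nontrivial_solution (x y z : Z) : Prop :=
  x <> 0 /\ y <> 0 /\ z <> 0 /\ quartic x y = z ^ 2.

Lemma quartic_mul (d x y : Z) : quartic (d * x) (d * y) = d ^ 4 * quartic x y.
Proof. unfold quartic. ring. Qed.

(* Modulo 8, quartic x y is 3, 7 or 5 according as x^2 is 0, 4 or 1. *)
Lemma quartic_odd_not_square (x y z : Z) : Z.Odd y -> quartic x y <> z ^ 2.
Proof.
  intros [i Hy] E. unfold quartic in E.
  destruct (square_mod8 x) as [a Ha], (square_mod8 y) as [b Hb],
    (square_mod8 z) as [c Hc].
  assert (Hy2 : y ^ 2 = 8 * b + 1).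
  { rewrite Hy in Hb |- *. clear - Hb. destruct Hb as [Hb|[Hb|Hb]]; lia. }
  replace (x ^ 4 + 9 * x ^ 2 * y ^ 2 + 27 * y ^ 4)
    with ((x ^ 2) ^ 2 + 9 * x ^ 2 * y ^ 2 + 27 * (y ^ 2) ^ 2) in E by ring.
  rewrite Hy2 in E.
  destruct Ha as [Ha|[Ha|Ha]]; rewrite Ha in E; clear - E Hc;
    destruct Hc as [Hc|[Hc|Hc]]; lia.
Qed.

Lemma sq_eq_prime_sq_mul (p z K : Z) :
  prime p -> z ^ 2 = p ^ 2 * K -> exists z', z = p * z' /\ z' ^ 2 = K.
Proof.
  intros Hp E. pose proof (prime_ge_2 p Hp).
  assert (Hpz : (p | z)).
  { apply (prime_dvd_pow p z 2 Hp); [lia|]. rewrite E. exists (p * K). ring. }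
  destruct Hpz as [z' ->]. exists z'. split; [ring|].
  apply Z.mul_reg_l with (p ^ 2); [lia|]. rewrite <- E. ring.
Qed.

Lemma nontrivial_solution_div_prime (p x y z : Z) :
  prime p -> nontrivial_solution (p * x) (p * y) z ->
  exists z', nontrivial_solution x y z'.
Proof.
  intros Hp (Hx & Hy & Hz & E). rewrite quartic_mul in E.
  destruct (sq_eq_prime_sq_mul p z (p ^ 2 * quartic x y) Hp) as (z1 & -> & E1).
  { rewrite <- E. ring. }
  destruct (sq_eq_prime_sq_mul p z1 (quartic x y) Hp E1) as (z2 & -> & E2).
  exists z2. split; [|split; [|split]].
  - intros ->. apply Hx. ring.
  - intros ->. apply Hy. ring.
  - intros ->. apply Hz. ring.
  - now symmetry.
Qed.

Lemma primitive_solution_not_3_dvd (x y z : Z) :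
  rel_prime x y -> quartic x y = z ^ 2 -> ~ (3 | x).
Proof.
  intros Hxy E [w ->].
  destruct (sq_eq_prime_sq_mul 3 z (9 * w ^ 4 + 9 * w ^ 2 * y ^ 2 + 3 * y ^ 4) prime_3)
    as (t & _ & Et); [rewrite <- E; unfold quartic; ring|].
  assert (Ht : (3 | t)).
  { apply (prime_dvd_pow 3 t 2 prime_3); [lia|].
    exists (3 * w ^ 4 + 3 * w ^ 2 * y ^ 2 + y ^ 4). rewrite Et. ring. }
  destruct Ht as [s ->].
  assert (Hy : (3 | y)).
  { apply (prime_dvd_pow 3 y 4 prime_3); [lia|].
    exists (s ^ 2 - w ^ 4 - w ^ 2 * y ^ 2). clear - Et. lia. }
  exact (rel_prime_no_common_prime _ _ 3 Hxy prime_3 (Z.divide_factor_r 3 w) Hy).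
Qed.

Lemma primitive_solution_first_factor (x m z : Z) :
  m <> 0 -> ~ (3 | x) -> rel_prime x m -> quartic x (2 * m) = z ^ 2 ->
  exists a b, m ^ 2 = (a * b) ^ 2 /\ x ^ 2 = a ^ 4 - 18 * a ^ 2 * b ^ 2 - 27 * b ^ 4.
Proof.
  intros Hm H3 Hxm E.
  assert (HV3 : ~ (3 | x ^ 2 + 18 * m ^ 2)).
  { intros HV. apply H3, (prime_dvd_pow 3 x 2 prime_3); [lia|].
    replace (x ^ 2) with (x ^ 2 + 18 * m ^ 2 - 3 * (6 * m ^ 2)) by ring.
    apply Z.divide_sub_r; [exact HV|apply Z.divide_factor_l]. }
  assert (HVm : rel_prime (x ^ 2 + 18 * m ^ 2) m).
  { apply rel_prime_sym, Zgcd_1_rel_prime.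
    replace (x ^ 2 + 18 * m ^ 2) with (x ^ 2 + (18 * m) * m) by ring.
    rewrite Z.gcd_add_mult_diag_r. apply Zgcd_1_rel_prime, rel_prime_Zpower_r; [lia|].
    now apply rel_prime_sym. }
  destruct (sq_eq_sq_add_4mul_factor (Z.abs z) (x ^ 2 + 18 * m ^ 2) (27 * m ^ 4))
    as (p & q & Hp & Hq & Hpq & Epq & _ & EV).
  - apply Z.abs_nonneg.
  - pose proof (pow4_pos m Hm). lia.
  - now apply rel_prime_27_mul_pow4.
  - rewrite <- Z.pow_even_abs, <- E by (exists 1; reflexivity). unfold quartic. ring.
  - destruct (rel_prime_mul_eq_prime_pow_mul_pow 3 3 4 p q m prime_3)
      as (a & b & Hab & [[-> ->]|[-> ->]]); [lia..|exact Hpq|exact Epq| |].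
    + apply pow4_eq_sq_eq in Hab. exists a, b. split; [exact Hab|].
      clear - EV Hab. rewrite Hab in EV. lia.
    + exfalso. apply H3, (three_dvd_sum_sq x (a ^ 2)).
      exists (9 * b ^ 4 - 6 * m ^ 2). clear - EV. lia.
Qed.

Lemma quartic_form_pos (e f : Z) : f <> 0 -> 0 < e ^ 4 - 9 * e ^ 2 * f ^ 2 + 27 * f ^ 4.
Proof.
  intros Hf. pose proof (pow4_pos f Hf).
  assert (Hsq : 0 <= (2 * e ^ 2 - 9 * f ^ 2) ^ 2)
    by (apply Z.pow_even_nonneg; exists 1; reflexivity).
  assert (Hid : 4 * (e ^ 4 - 9 * e ^ 2 * f ^ 2 + 27 * f ^ 4)
                = (2 * e ^ 2 - 9 * f ^ 2) ^ 2 + 27 * f ^ 4) by ring.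
  lia.
Qed.

Lemma primitive_solution_second_factor (x a b : Z) :
  b <> 0 -> ~ (3 | x) -> rel_prime x b ->
  x ^ 2 = a ^ 4 - 18 * a ^ 2 * b ^ 2 - 27 * b ^ 4 ->
  exists e f, b ^ 2 = (e * f) ^ 2 /\ a ^ 2 = quartic e f.
Proof.
  intros Hb H3 Hxb Ex.
  destruct (sq_eq_sq_add_4mul_factor (Z.abs (a ^ 2 - 9 * b ^ 2)) x (27 * b ^ 4))
    as (r & s & Hr & Hs & Hrs & Ers & Ec & _).
  - apply Z.abs_nonneg.
  - pose proof (pow4_pos b Hb). lia.
  - now apply rel_prime_27_mul_pow4.
  - rewrite <- Z.pow_even_abs, Ex by (exists 1; reflexivity). ring.
  - destruct (rel_prime_mul_eq_prime_pow_mul_pow 3 3 4 r s b prime_3)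
      as (e & f & Hbef & Hcase); [lia..|exact Hrs|exact Ers|].
    assert (Hsum : r + s = e ^ 4 + 27 * f ^ 4)
      by (destruct Hcase as [[-> ->]|[-> ->]]; ring).
    apply pow4_eq_sq_eq in Hbef.
    assert (Hf : f <> 0) by (intros ->; apply Hb; clear - Hbef; nia).
    exists e, f. split; [exact Hbef|unfold quartic].
    destruct (Z.abs_spec (a ^ 2 - 9 * b ^ 2)) as [[_ Habs]|[_ Habs]];
      rewrite Habs, Hsum in Ec.
    + replace (a ^ 2) with (a ^ 2 - 9 * b ^ 2 + 9 * b ^ 2) by ring.
      rewrite Ec, Hbef. ring.
    + exfalso.
      assert (Ha : a ^ 2 = 9 * (e * f) ^ 2 - (e ^ 4 + 27 * f ^ 4))
        by (rewrite <- Hbef; clear - Ec; lia).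
      rewrite Z.pow_mul_l in Ha.
      pose proof (quartic_form_pos e f Hf) as Hpos.
      pose proof (Z.pow_even_nonneg a 2 ltac:(exists 1; reflexivity)) as Ha2.
      clear - Ha Hpos Ha2. lia.
Qed.

Lemma primitive_solution_descent (x y z : Z) :
  rel_prime x y -> nontrivial_solution x y z ->
  exists x' y' z', nontrivial_solution x' y' z' /\ y' ^ 2 < y ^ 2.
Proof.
  intros Hxy (Hx & Hy & Hz & E).
  pose proof (primitive_solution_not_3_dvd x y z Hxy E) as H3.
  destruct (Z.Even_or_Odd y) as [[m ->]|Hodd];
    [|exfalso; exact (quartic_odd_not_square x y z Hodd E)].
  assert (Hm : m <> 0) by lia.
  assert (Hxm : rel_prime x m).
  { apply rel_prime_sym, (rel_prime_div (2 * m)); [now apply rel_prime_sym|].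
    apply Z.divide_factor_r. }
  destruct (primitive_solution_first_factor x m z Hm H3 Hxm E) as (a & b & Hmab & Ex).
  assert (Hb : b <> 0) by (intros ->; apply Hm; clear - Hmab; nia).
  assert (Hxb : rel_prime x b).
  { apply rel_prime_sym, (rel_prime_div (m ^ 2)).
    - apply rel_prime_sym, rel_prime_Zpower_r; [lia|exact Hxm].
    - rewrite Hmab. exists (a ^ 2 * b). ring. }
  destruct (primitive_solution_second_factor x a b Hb H3 Hxb Ex) as (e & f & Hbef & Ea).
  assert (Ha : a <> 0) by (intros ->; apply Hm; clear - Hmab; nia).
  assert (He : e <> 0) by (intros ->; apply Hb; clear - Hbef; nia).
  assert (Hf : f <> 0) by (intros ->; apply Hb; clear - Hbef; nia).
  exists e, f, a. split; [repeat split; [exact He|exact Hf|exact Ha|now symmetry]|].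
  assert (Hy2 : (2 * m) ^ 2 = 4 * a ^ 2 * e ^ 2 * f ^ 2).
  { transitivity (4 * (a * b) ^ 2); [rewrite <- Hmab; ring|].
    rewrite Z.pow_mul_l, Hbef. ring. }
  rewrite Hy2. clear - Ha He Hf.
  assert (1 <= a ^ 2 /\ 1 <= e ^ 2 /\ 1 <= f ^ 2) as (? & ? & ?)
    by (repeat split; nia).
  assert (1 <= a ^ 2 * e ^ 2) by nia. nia.
Qed.

Lemma nontrivial_solution_descent (x y z : Z) :
  nontrivial_solution x y z ->
  exists x' y' z', nontrivial_solution x' y' z' /\ y' ^ 2 < y ^ 2.
Proof.
  intros Hsol.
  destruct (Z.eq_dec (Z.gcd x y) 1) as [Hg|Hg].
  - apply (primitive_solution_descent x y z); [now apply Zgcd_1_rel_prime|exact Hsol].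
  - destruct (exists_common_prime_divisor x y) as (p & Hp & [x' ->] & [y' ->]);
      [apply Hsol|exact Hg|].
    rewrite (Z.mul_comm x'), (Z.mul_comm y') in Hsol.
    destruct (nontrivial_solution_div_prime p x' y' z Hp Hsol) as [z' Hsol'].
    exists x', y', z'. split; [exact Hsol'|].
    pose proof (prime_ge_2 p Hp). destruct Hsol' as (_ & Hy' & _).
    rewrite Z.pow_mul_l.
    assert (1 <= y' ^ 2) by nia. assert (4 <= p ^ 2) by nia. nia.
Qed.

Lemma no_nontrivial_solution (x y z : Z) : ~ nontrivial_solution x y z.
Proof.
  remember (y ^ 2) as n eqn:Hn.
  assert (Hn0 : 0 <= n) by (subst; nia).
  revert x y z Hn. pattern n; apply Z_lt_induction; [|exact Hn0]; clear n Hn0.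
  intros n IH x y z Hn Hsol.
  destruct (nontrivial_solution_descent x y z Hsol) as (x' & y' & z' & Hsol' & Hlt).
  apply (IH (y' ^ 2)) with x' y' z'; [nia|reflexivity|exact Hsol'].
Qed.

Theorem mainTheorem2 :
  ~ (exists x y z : Z,
       x <> 0 /\ y <> 0 /\ z <> 0 /\
       x ^ 4 + 9 * x ^ 2 * y ^ 2 + 27 * y ^ 4 = z ^ 2).
Proof.
  intros (x & y & z & Hsol).
  exact (no_nontrivial_solution x y z Hsol).
Qed.
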